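(* Let $K\subseteq\mathbb R^{|\mathcal A|\times|\mathcal X|}$ be a convex cone of entrywise nonnegative vectors $\tilde p$ for which $\operatorname{tr}[\tilde p]:=\sum_{a}\tilde p(a\mid x)$ is independent of $x$, and such that $K\supseteq\{q\,p:q\ge0,\ p\in\mathcal Q\}$. For $\mathbf y\in\mathbf f[\mathcal Q]$ define $$G(\mathbf y)=\sup\Big\{\sum_{a\in\mathcal A,x\in\mathcal X_r}\tilde p_{a,x}(a\mid x)\ :\ \tilde p_{a,x}\in K,\ \sum_{a\in\mathcal A,x\in\mathcal X_r}\operatorname{tr}[\tilde p_{a,x}]=1,\ \sum_{a\in\mathcal A,x\in\mathcal X_r}\mathbf f[\tilde p_{a,x}]=\mathbf y\Big\}.$$ Then $H(\mathbf y):=-\log_2G(\mathbf y)$ is a randomness-bounding function for $\mathcal X_r$. Moreover, for $\hat{\mathbf f}^-\le\hat{\mathbf f}^+$ in $(\mathbb R\cup\{\pm\infty\})^t$, defining $G([\hat{\mathbf f}^-,\hat{\mathbf f}^+])$ by the same supremum with the equality constraint replaced by $\hat{\mathbf f}^-\le\sum_{a,x}\mathbf f[\tilde p_{a,x}]\le\hat{\mathbf f}^+$ (componentwise), and setting $G=1$ when this problem is infeasible, the number $-\log_2G([\hat{\mathbf f}^-,\hat{\mathbf f}^+])$ is at most $\inf\{H(\mathbf y):\mathbf y\in\mathbf f[\mathcal Q]\cap[\hat{\mathbf f}^-,\hat{\mathbf f}^+]\}$.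
   Context: Setting. A Bell device consists of $k$ boxes with finite input sets $\mathcal X_i$ and output sets $\mathcal A_i$; $\mathcal X=\prod_i\mathcal X_i$, $\mathcal A=\prod_i\mathcal A_i$. Single-round behaviors $p=(p(a\mid x))_{a\in\mathcal A,x\in\mathcal X}$; $\mathcal Q$ the (convex) set of quantum behaviors, realizable by a $k$-partite quantum state and local measurements. Bell expression $f\in\mathbb R^{|\mathcal A|\times|\mathcal X|}$ acts linearly on any vector $\tilde p$ via $f[\tilde p]=\sum_{a,x}f(a,x)\tilde p(a\mid x)$; fixed $\mathbf f=(f_1,\dots,f_t)$, $\mathbf f[\tilde p]=(f_1[\tilde p],\dots,f_t[\tilde p])$, $\mathbf f[\mathcal Q]=\{\mathbf f[p]:p\in\mathcal Q\}$. Examples of admissible $K$: the cone of unnormalized quantum behaviors or any of its NPA (semidefinite) outer relaxations. RB function: for a nonempty $\mathcal X_r\subseteq\mathcal X$, a function $H:\mathbf f[\mathcal Q]\to[0,\log_2|\mathcal A|]$ such that (1) $\min_{a\in\mathcal A,x\in\mathcal X_r}(-\log_2p(a\mid x))\ge H(\mathbf f[p])$ for all $p\in\mathcal Q$, and (2) $H(q\mathbf f[p_1]+(1-q)\mathbf f[p_2])\le qH(\mathbf f[p_1])+(1-q)H(\mathbf f[p_2])$ for all $q\in[0,1]$, $p_1,p_2\in\mathcal Q$. *)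

From Stdlib Require Import Reals Lra Lia List Classical ClassicalDescription ClassicalEpsilon.
Open Scope R_scope.

(* Outputs a are encoded as naturals a < nA (nA = |A|), inputs x as x < nX.
   Only the product structure of A and X is irrelevant here. *)

(* A (possibly unnormalized) behavior  p~(a|x)  ∈ R^{|A|×|X|}:  p a x. *)
Definition behavior := nat -> nat -> R.
Definition bexpr := nat -> nat -> R.

Definition sumn (n : nat) (F : nat -> R) : R :=
  fold_right (fun i acc => F i + acc) 0 (seq 0 n).

Definition bell (nA nX : nat) (f : bexpr) (p : behavior) : R :=
  sumn nA (fun a => sumn nX (fun x => f a x * p a x)).

(* bold f [p] = (f_1[p], ..., f_t[p]) ; components i < t are meaningful *)
Definition fvec (nA nX : nat) (fs : nat -> bexpr) (p : behavior) : nat -> R :=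
  fun i => bell nA nX (fs i) p.

(* tr[p] := sum_a p(a|x), evaluated at input x = 0 (independent of x in K) *)
Definition trace (nA : nat) (p : behavior) : R := sumn nA (fun a => p a 0%nat).

Definition log2 (r : R) : R := ln r / ln 2.

Definition is_behavior_set (nA nX : nat) (Q : behavior -> Prop) : Prop :=
  forall p, Q p ->
    (forall a x, (a < nA)%nat -> (x < nX)%nat -> 0 <= p a x) /\
    (forall x, (x < nX)%nat -> sumn nA (fun a => p a x) = 1).

Definition convex_set (Q : behavior -> Prop) : Prop :=
  forall q p1 p2, 0 <= q <= 1 -> Q p1 -> Q p2 ->
    Q (fun a x => q * p1 a x + (1 - q) * p2 a x).

Definition admissible_cone (nA nX : nat) (Q K : behavior -> Prop) : Prop :=
  (forall p1 p2, K p1 -> K p2 -> K (fun a x => p1 a x + p2 a x)) /\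
  (forall q p, 0 <= q -> K p -> K (fun a x => q * p a x)) /\
  (forall p, K p -> forall a x, (a < nA)%nat -> (x < nX)%nat -> 0 <= p a x) /\
  (forall p, K p -> forall x x', (x < nX)%nat -> (x' < nX)%nat ->
       sumn nA (fun a => p a x) = sumn nA (fun a => p a x')) /\
  (forall q p, 0 <= q -> Q p -> K (fun a x => q * p a x)).

Definition in_fQ (nA nX t : nat) (fs : nat -> bexpr) (Q : behavior -> Prop)
  (y : nat -> R) : Prop :=
  exists p, Q p /\ forall i, (i < t)%nat -> y i = fvec nA nX fs p i.

Definition sumAX (nA nX : nat) (Xr : nat -> bool) (F : nat -> nat -> R) : R :=
  sumn nA (fun a => sumn nX (fun x => if Xr x then F a x else 0)).

Definition feasible_obj (nA nX t : nat) (Xr : nat -> bool) (fs : nat -> bexpr)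
  (K : behavior -> Prop) (C : (nat -> R) -> Prop) (v : R) : Prop :=
  exists pt : nat -> nat -> behavior,
    (forall a x, (a < nA)%nat -> Xr x = true -> K (pt a x)) /\
    sumAX nA nX Xr (fun a x => trace nA (pt a x)) = 1 /\
    C (fun i => sumAX nA nX Xr (fun a x => bell nA nX (fs i) (pt a x))) /\
    v = sumAX nA nX Xr (fun a x => pt a x a x).

(* Supremum (least upper bound) of a set of reals, when it exists (junk 0 otherwise). *)
Definition supR (E : R -> Prop) : R :=
  match excluded_middle_informative (exists l, is_lub E l) with
  | left h => proj1_sig (constructive_indefinite_description _ h)
  | right _ => 0
  end.

Definition G (nA nX t : nat) (Xr : nat -> bool) (fs : nat -> bexpr)
  (K : behavior -> Prop) (y : nat -> R) : R :=
  supR (feasible_obj nA nX t Xr fs K (fun s => forall i, (i < t)%nat -> s i = y i)).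

Definition H (nA nX t : nat) (Xr : nat -> bool) (fs : nat -> bexpr)
  (K : behavior -> Prop) (y : nat -> R) : R :=
  - log2 (G nA nX t Xr fs K y).

Inductive ERbar : Type := Fin (r : R) | PInf | MInf.

Definition ERle (u v : ERbar) : Prop :=
  match u, v with
  | MInf, _ => True
  | _, PInf => True
  | Fin r, Fin s => r <= s
  | _, _ => False
  end.

Definition in_box (t : nat) (lo hi : nat -> ERbar) (s : nat -> R) : Prop :=
  forall i, (i < t)%nat -> ERle (lo i) (Fin (s i)) /\ ERle (Fin (s i)) (hi i).

Definition Gbox (nA nX t : nat) (Xr : nat -> bool) (fs : nat -> bexpr)
  (K : behavior -> Prop) (lo hi : nat -> ERbar) : R :=
  let S := feasible_obj nA nX t Xr fs K (in_box t lo hi) in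
  match excluded_middle_informative (exists v, S v) with
  | left _ => supR S
  | right _ => 1
  end.

(* Condition (1) is stated for each (a,x) with x ∈ X_r; when p(a|x) = 0 the
   left side is +∞ and the inequality is trivial, so only p(a|x) > 0 is stated. *)
Definition RB_function (nA nX t : nat) (Xr : nat -> bool) (fs : nat -> bexpr)
  (Q : behavior -> Prop) (Hf : (nat -> R) -> R) : Prop :=
  (forall y, in_fQ nA nX t fs Q y -> 0 <= Hf y <= log2 (INR nA)) /\
  (forall p, Q p -> forall a x, (a < nA)%nat -> Xr x = true -> 0 < p a x ->
      Hf (fvec nA nX fs p) <= - log2 (p a x)) /\
  (forall q p1 p2, 0 <= q <= 1 -> Q p1 -> Q p2 ->
      Hf (fun i => q * fvec nA nX fs p1 i + (1 - q) * fvec nA nX fs p2 i)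
      <= q * Hf (fvec nA nX fs p1) + (1 - q) * Hf (fvec nA nX fs p2)).

(* Placing a single behaviour p of Q, as the cone element 1 * p, at one pair
   (a, x) is feasible for the constraint f[p] with objective p(a|x); this gives
   condition (1), and, by pigeonhole on the outputs, G >= 1/|A|.  Each
   objective term p~(a|x) is at most tr[p~], so G <= 1.  A convex combination
   of feasible points is feasible for the mixed constraint because K is a
   convex cone, so G is concave on f[Q]; composing with the convex decreasing
   map -log2 gives condition (2).  Finally, a box containing y relaxes the
   equality constraint, so G([lo, hi]) >= G(y). *)

From Pilot Require Import Defs.
From Stdlib Require Import Reals Lra Lia List Classical ClassicalDescription ClassicalEpsilon.
Open Scope R_scope.

Lemma fold_right_add_init (F : nat -> R) (l : list nat) (c : R) :
  fold_right (fun i acc => F i + acc) c l = fold_right (fun i acc => F i + acc) 0 l + c.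
Proof. induction l as [|i l IH]; simpl; [lra | rewrite IH; lra]. Qed.

Lemma sumn_0 F : sumn 0 F = 0.
Proof. reflexivity. Qed.

Lemma sumn_S n F : sumn (S n) F = sumn n F + F n.
Proof. unfold sumn. rewrite seq_S, fold_right_app. simpl. rewrite fold_right_add_init. lra. Qed.

Lemma sumn_ext n F G : (forall i, (i < n)%nat -> F i = G i) -> sumn n F = sumn n G.
Proof.
  induction n as [|n IH]; intros h; [reflexivity |].
  rewrite !sumn_S, IH, h; auto; intros; apply h; lia.
Qed.

Lemma sumn_le n F G : (forall i, (i < n)%nat -> F i <= G i) -> sumn n F <= sumn n G.
Proof.
  induction n as [|n IH]; intros h; [apply Rle_refl |]. rewrite !sumn_S.
  apply Rplus_le_compat; [apply IH; intros; apply h | apply h]; lia.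
Qed.

Lemma sumn_lin n F G c d :
  sumn n (fun i => c * F i + d * G i) = c * sumn n F + d * sumn n G.
Proof. induction n as [|n IH]; [rewrite !sumn_0; ring | rewrite !sumn_S, IH; ring]. Qed.

Lemma sumn_scal n F c : sumn n (fun i => c * F i) = c * sumn n F.
Proof. induction n as [|n IH]; [rewrite !sumn_0; ring | rewrite !sumn_S, IH; ring]. Qed.

Lemma sumn_ge0 n F : (forall i, (i < n)%nat -> 0 <= F i) -> 0 <= sumn n F.
Proof.
  induction n as [|n IH]; intros h; [apply Rle_refl |]. rewrite sumn_S.
  apply Rplus_le_le_0_compat; [apply IH; intros; apply h | apply h]; lia.
Qed.

Lemma sumn_ge_term n F i :
  (i < n)%nat -> (forall j, (j < n)%nat -> 0 <= F j) -> F i <= sumn n F.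
Proof.
  induction n as [|n IH]; intros hi h; [lia |]. rewrite sumn_S.
  destruct (Nat.eq_dec i n) as [-> | ne].
  - assert (0 <= sumn n F) by (apply sumn_ge0; intros; apply h; lia). lra.
  - assert (F i <= sumn n F) by (apply IH; [lia | intros; apply h; lia]).
    assert (0 <= F n) by (apply h; lia). lra.
Qed.

Lemma sumn_indicator n G i :
  (i < n)%nat -> sumn n (fun j => (if Nat.eqb j i then 1 else 0) * G j) = G i.
Proof.
  induction n as [|n IH]; intros hi; [lia |]. rewrite sumn_S.
  destruct (Nat.eq_dec i n) as [-> | ne].
  - rewrite Nat.eqb_refl, (sumn_ext n _ (fun j => 0 * G j)), sumn_scal; [ring |].
    intros j hj. destruct (Nat.eqb_spec j n); [lia | reflexivity].
  - rewrite IH by lia. destruct (Nat.eqb_spec n i); [lia | ring].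
Qed.

Lemma sumn_lt_const n F c :
  (0 < n)%nat -> (forall i, (i < n)%nat -> F i < c) -> sumn n F < INR n * c.
Proof.
  induction n as [|n IH]; intros hn h; [lia |]. rewrite sumn_S, S_INR.
  assert (F n < c) by (apply h; lia).
  destruct n as [|n]; [rewrite sumn_0; simpl; lra |].
  assert (sumn (S n) F < INR (S n) * c) by (apply IH; [lia | intros; apply h; lia]). lra.
Qed.

Lemma sumAX_ext nA nX Xr F G :
  (forall a x, (a < nA)%nat -> (x < nX)%nat -> F a x = G a x) ->
  sumAX nA nX Xr F = sumAX nA nX Xr G.
Proof.
  intros h. apply sumn_ext; intros a ha. apply sumn_ext; intros x hx. rewrite h; auto.
Qed.

Lemma sumAX_le nA nX Xr F G :
  (forall a x, (a < nA)%nat -> (x < nX)%nat -> Xr x = true -> F a x <= G a x) ->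
  sumAX nA nX Xr F <= sumAX nA nX Xr G.
Proof.
  intros h. apply sumn_le; intros a ha. apply sumn_le; intros x hx.
  destruct (Xr x) eqn:E; [apply h; auto | apply Rle_refl].
Qed.

Lemma sumAX_lin nA nX Xr F G c d :
  sumAX nA nX Xr (fun a x => c * F a x + d * G a x)
  = c * sumAX nA nX Xr F + d * sumAX nA nX Xr G.
Proof.
  unfold sumAX. rewrite <- sumn_lin. apply sumn_ext; intros a ha.
  rewrite <- sumn_lin. apply sumn_ext; intros x hx. destruct (Xr x); ring.
Qed.

Definition point_indicator (a x : nat) (a' x' : nat) : R :=
  if andb (Nat.eqb a' a) (Nat.eqb x' x) then 1 else 0.

Lemma sumAX_point_indicator nA nX Xr F a x :
  (a < nA)%nat -> (x < nX)%nat -> Xr x = true ->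
  sumAX nA nX Xr (fun a' x' => point_indicator a x a' x' * F a' x') = F a x.
Proof.
  intros ha hx hX. unfold sumAX, point_indicator.
  rewrite <- (sumn_indicator nA (fun a' => F a' x) a ha).
  apply sumn_ext; intros a' ha'.
  rewrite <- (sumn_indicator nX (fun x' => (if Nat.eqb a' a then 1 else 0) * F a' x') x hx).
  apply sumn_ext; intros x' hx'. destruct (Nat.eqb_spec x' x) as [-> | ne].
  - rewrite hX, Bool.andb_true_r. ring.
  - rewrite Bool.andb_false_r. destruct (Xr x'); ring.
Qed.

Lemma bell_lin nA nX f P P' c d :
  bell nA nX f (fun b z => c * P b z + d * P' b z)
  = c * bell nA nX f P + d * bell nA nX f P'.
Proof.
  unfold bell. rewrite <- sumn_lin. apply sumn_ext; intros a ha.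
  rewrite <- sumn_lin. apply sumn_ext; intros x hx. ring.
Qed.

Lemma bell_scal nA nX f P c : bell nA nX f (fun b z => c * P b z) = c * bell nA nX f P.
Proof.
  unfold bell. rewrite <- sumn_scal. apply sumn_ext; intros a ha.
  rewrite <- sumn_scal. apply sumn_ext; intros x hx. ring.
Qed.

Lemma ln_le_compat x y : 0 < x -> x <= y -> ln x <= ln y.
Proof.
  intros hx [lt | ->]; [left; apply ln_increasing; lra | apply Rle_refl].
Qed.

Lemma ln_le_sub1 x : 0 < x -> ln x <= x - 1.
Proof. intros hx. pose proof (exp_ineq1_le (ln x)) as h. rewrite exp_ln in h; lra. Qed.

(* Tangent-line argument: apply [ln u <= u - 1] at a/m and b/m, m the mean. *)
Lemma ln_concave a b q : 0 < a -> 0 < b -> 0 <= q <= 1 ->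
  q * ln a + (1 - q) * ln b <= ln (q * a + (1 - q) * b).
Proof.
  intros ha hb hq. set (m := q * a + (1 - q) * b).
  assert (hm : 0 < m) by (unfold m; nra).
  assert (hla : ln (a / m) <= a / m - 1) by (apply ln_le_sub1, Rdiv_lt_0_compat; lra).
  assert (hlb : ln (b / m) <= b / m - 1) by (apply ln_le_sub1, Rdiv_lt_0_compat; lra).
  unfold Rdiv in hla, hlb.
  rewrite ln_mult, ln_Rinv in hla, hlb by (auto; apply Rinv_0_lt_compat; lra).
  assert (e : q * (a * / m) + (1 - q) * (b * / m) = 1) by (unfold m; field; fold m; lra).
  nra.
Qed.

Lemma ln2_pos : 0 < ln 2.
Proof. pose proof ln_lt_2; lra. Qed.

Lemma log2_le x y : 0 < x -> x <= y -> log2 x <= log2 y.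
Proof.
  intros hx hxy. unfold log2, Rdiv. apply Rmult_le_compat_r.
  - left; apply Rinv_0_lt_compat, ln2_pos.
  - apply ln_le_compat; auto.
Qed.

Lemma log2_1 : log2 1 = 0.
Proof. unfold log2. rewrite ln_1. unfold Rdiv. ring. Qed.

Lemma log2_inv x : 0 < x -> log2 (/ x) = - log2 x.
Proof. intros hx. unfold log2. rewrite ln_Rinv by auto. unfold Rdiv. ring. Qed.

Lemma log2_concave a b q : 0 < a -> 0 < b -> 0 <= q <= 1 ->
  q * log2 a + (1 - q) * log2 b <= log2 (q * a + (1 - q) * b).
Proof.
  intros ha hb hq. unfold log2, Rdiv.
  pose proof (Rinv_0_lt_compat _ ln2_pos).
  pose proof (ln_concave a b q ha hb hq). nra.
Qed.

Lemma supR_is_lub E : (exists v, E v) -> (forall v, E v -> v <= 1) -> is_lub E (supR E).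
Proof.
  intros hne hb. unfold supR.
  destruct (excluded_middle_informative _) as [h | h].
  - destruct (constructive_indefinite_description _ h); assumption.
  - destruct (completeness E) as [m hm]; [exists 1; exact hb | exact hne | contradiction h; eauto].
Qed.

Lemma lub_affine_le E l c d m :
  is_lub E l -> (exists v, E v) -> 0 <= c ->
  (forall v, E v -> c * v + d <= m) -> c * l + d <= m.
Proof.
  intros [_ least] [w hw] hc h. destruct (Req_dec c 0) as [-> | nc].
  - specialize (h w hw). lra.
  - assert (e : c * ((m - d) / c) = m - d) by (field; auto).
    assert (l <= (m - d) / c).
    { apply least. intros v hv. specialize (h v hv).
      apply (Rmult_le_reg_l c); lra. }
    assert (c * l <= c * ((m - d) / c)) by (apply Rmult_le_compat_l; lra).
    lra.
Qed.

Lemma lub_mix_le (E1 E2 : R -> Prop) l1 l2 l q :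
  is_lub E1 l1 -> is_lub E2 l2 -> (exists v, E1 v) -> (exists v, E2 v) -> 0 <= q <= 1 ->
  (forall v1 v2, E1 v1 -> E2 v2 -> q * v1 + (1 - q) * v2 <= l) ->
  q * l1 + (1 - q) * l2 <= l.
Proof.
  intros lub1 lub2 ne1 ne2 hq h.
  apply (lub_affine_le E1 l1 q ((1 - q) * l2)); auto; [lra |]. intros v1 hv1.
  rewrite Rplus_comm. apply (lub_affine_le E2 l2 (1 - q) (q * v1)); auto; [lra |].
  intros v2 hv2. specialize (h v1 v2 hv1 hv2). lra.
Qed.

Definition eq_constr (t : nat) (y : nat -> R) (s : nat -> R) : Prop :=
  forall i, (i < t)%nat -> s i = y i.

Lemma feasible_obj_mono nA nX t Xr fs K (C C' : (nat -> R) -> Prop) v :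
  (forall s, C s -> C' s) ->
  feasible_obj nA nX t Xr fs K C v -> feasible_obj nA nX t Xr fs K C' v.
Proof. intros h [pt [hK [htr [hC hv]]]]. exists pt; auto. Qed.

Section FeasibleSets.

Variables (nA nX t : nat) (Xr : nat -> bool) (fs : nat -> bexpr) (Q K : behavior -> Prop).
Hypothesis Xr_lt : forall x, Xr x = true -> (x < nX)%nat.
Hypothesis Xr_nonempty : exists x, Xr x = true.
Hypothesis Q_behaviors : is_behavior_set nA nX Q.
Hypothesis K_cone : admissible_cone nA nX Q K.

Let feasible := feasible_obj nA nX t Xr fs K.

Lemma feasible_obj_le1 C v : feasible C v -> v <= 1.
Proof.
  destruct K_cone as (_ & _ & K_ge0 & K_trace & _).
  intros [pt [hK [htr [_ ->]]]]. rewrite <- htr. apply sumAX_le. intros a x ha hx hX.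
  unfold trace. rewrite (K_trace (pt a x) (hK a x ha hX) 0%nat x) by lia.
  apply (sumn_ge_term nA (fun b => pt a x b x)); auto.
Qed.

Lemma feasible_obj_at_fvec y p a x :
  Q p -> (a < nA)%nat -> Xr x = true ->
  (forall i, (i < t)%nat -> y i = fvec nA nX fs p i) ->
  feasible (eq_constr t y) (p a x).
Proof.
  destruct K_cone as (_ & _ & _ & _ & K_Q).
  intros hp ha hX hy. pose proof (Xr_lt x hX) as hx.
  exists (fun a' x' b z => point_indicator a x a' x' * p b z).
  split; [| split; [| split]].
  - intros a' x' _ _. apply K_Q; auto. unfold point_indicator. destruct (_ && _)%bool; lra.
  - unfold trace. rewrite (sumAX_ext _ _ _ _
      (fun a' x' => point_indicator a x a' x' * sumn nA (fun b => p b 0%nat)))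
      by (intros; apply sumn_scal).
    rewrite sumAX_point_indicator by auto. apply (proj2 (Q_behaviors p hp)). lia.
  - intros i hi. rewrite hy by auto. rewrite (sumAX_ext _ _ _ _
      (fun a' x' => point_indicator a x a' x' * bell nA nX (fs i) p))
      by (intros; apply bell_scal).
    apply sumAX_point_indicator; auto.
  - symmetry. apply (sumAX_point_indicator nA nX Xr (fun a' x' => p a' x')); auto.
Qed.

Lemma feasible_obj_mix y1 y2 v1 v2 q : 0 <= q <= 1 ->
  feasible (eq_constr t y1) v1 -> feasible (eq_constr t y2) v2 ->
  feasible (eq_constr t (fun i => q * y1 i + (1 - q) * y2 i)) (q * v1 + (1 - q) * v2).
Proof.
  destruct K_cone as (K_add & K_scal & _).
  intros hq [pt1 [hK1 [htr1 [hC1 ->]]]] [pt2 [hK2 [htr2 [hC2 ->]]]].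
  exists (fun a x b z => q * pt1 a x b z + (1 - q) * pt2 a x b z).
  split; [| split; [| split]].
  - intros a x ha hX.
    apply (K_add (fun b z => q * pt1 a x b z) (fun b z => (1 - q) * pt2 a x b z));
      apply K_scal; auto; lra.
  - unfold trace. rewrite (sumAX_ext _ _ _ _
      (fun a x => q * trace nA (pt1 a x) + (1 - q) * trace nA (pt2 a x)))
      by (intros; apply sumn_lin).
    rewrite sumAX_lin, htr1, htr2. ring.
  - intros i hi. rewrite (sumAX_ext _ _ _ _
      (fun a x => q * bell nA nX (fs i) (pt1 a x) + (1 - q) * bell nA nX (fs i) (pt2 a x)))
      by (intros; apply bell_lin).
    rewrite sumAX_lin, hC1, hC2 by auto. reflexivity.
  - symmetry. apply sumAX_lin.
Qed.

Lemma exists_feasible_ge_inv_card y : in_fQ nA nX t fs Q y ->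
  exists v, feasible (eq_constr t y) v /\ 0 < INR nA /\ / INR nA <= v.
Proof.
  destruct Xr_nonempty as [x hX]. intros [p [hp hy]]. pose proof (Xr_lt x hX) as hx.
  assert (hsum : sumn nA (fun a => p a x) = 1) by (apply (proj2 (Q_behaviors p hp)); auto).
  assert (hA : (0 < nA)%nat) by (destruct nA; [rewrite sumn_0 in hsum; lra | lia]).
  assert (hA' : 0 < INR nA) by (apply lt_0_INR; auto).
  assert (big : exists a, (a < nA)%nat /\ / INR nA <= p a x).
  { apply NNPP. intros none.
    assert (hlt : sumn nA (fun a => p a x) < INR nA * / INR nA).
    { apply sumn_lt_const; auto. intros a ha. apply Rnot_le_lt. intros hle. eauto. }
    rewrite Rinv_r in hlt by lra. lra. }
  destruct big as [a [ha hpa]].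
  exists (p a x). split; [apply feasible_obj_at_fvec |]; auto.
Qed.

Lemma G_is_lub y : in_fQ nA nX t fs Q y ->
  is_lub (feasible (eq_constr t y)) (G nA nX t Xr fs K y).
Proof.
  intros hy. destruct (exists_feasible_ge_inv_card y hy) as [v [hv _]].
  apply supR_is_lub; [eauto | apply feasible_obj_le1].
Qed.

Lemma G_bounds y : in_fQ nA nX t fs Q y ->
  0 < INR nA /\ / INR nA <= G nA nX t Xr fs K y /\ G nA nX t Xr fs K y <= 1.
Proof.
  intros hy. destruct (G_is_lub y hy) as [ub least].
  destruct (exists_feasible_ge_inv_card y hy) as [v [hv [hA hvA]]].
  split; [| split]; auto.
  - apply Rle_trans with v; auto.
  - apply least. intros w hw. apply (feasible_obj_le1 _ _ hw).
Qed.

Lemma G_pos y : in_fQ nA nX t fs Q y -> 0 < G nA nX t Xr fs K y.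
Proof.
  intros hy. destruct (G_bounds y hy) as [hA [hG _]].
  apply Rlt_le_trans with (/ INR nA); auto. apply Rinv_0_lt_compat; auto.
Qed.

Lemma G_concave q p1 p2 : 0 <= q <= 1 -> Q p1 -> Q p2 ->
  q * G nA nX t Xr fs K (fvec nA nX fs p1) + (1 - q) * G nA nX t Xr fs K (fvec nA nX fs p2)
  <= G nA nX t Xr fs K (fun i => q * fvec nA nX fs p1 i + (1 - q) * fvec nA nX fs p2 i).
Proof.
  intros hq hp1 hp2.
  assert (hy1 : in_fQ nA nX t fs Q (fvec nA nX fs p1)) by (exists p1; auto).
  assert (hy2 : in_fQ nA nX t fs Q (fvec nA nX fs p2)) by (exists p2; auto).
  destruct (exists_feasible_ge_inv_card _ hy1) as [w1 [hw1 _]].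
  destruct (exists_feasible_ge_inv_card _ hy2) as [w2 [hw2 _]].
  assert (lubm : is_lub (feasible (eq_constr t
            (fun i => q * fvec nA nX fs p1 i + (1 - q) * fvec nA nX fs p2 i)))
          (G nA nX t Xr fs K (fun i => q * fvec nA nX fs p1 i + (1 - q) * fvec nA nX fs p2 i))).
  { apply supR_is_lub; [exists (q * w1 + (1 - q) * w2); apply feasible_obj_mix; auto |].
    apply feasible_obj_le1. }
  apply (lub_mix_le _ _ _ _ _ q (G_is_lub _ hy1) (G_is_lub _ hy2)); eauto.
  intros v1 v2 hv1 hv2. apply (proj1 lubm), feasible_obj_mix; auto.
Qed.

Lemma G_le_Gbox lo hi y :
  in_fQ nA nX t fs Q y -> in_box t lo hi y ->
  G nA nX t Xr fs K y <= Gbox nA nX t Xr fs K lo hi.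
Proof.
  intros hy hbox.
  assert (relax : forall v, feasible (eq_constr t y) v -> feasible (in_box t lo hi) v).
  { intros v; apply feasible_obj_mono. intros s hs i hi'. rewrite (hs i hi'). exact (hbox i hi'). }
  destruct (exists_feasible_ge_inv_card y hy) as [w [hw _]].
  assert (lub_box : is_lub (feasible (in_box t lo hi)) (supR (feasible (in_box t lo hi))))
    by (apply supR_is_lub; [eauto | apply feasible_obj_le1]).
  unfold Gbox. destruct (excluded_middle_informative _) as [_ | none];
    [| contradiction none; exists w; apply relax, hw].
  apply (proj2 (G_is_lub y hy)). intros v hv. apply (proj1 lub_box), relax, hv.
Qed.

End FeasibleSets.

Theorem mainTheorem5 (nA nX t : nat) (Xr : nat -> bool) (fs : nat -> bexpr)
  (Q K : behavior -> Prop) :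
  (forall x, Xr x = true -> (x < nX)%nat) ->
  (exists x, Xr x = true) ->
  is_behavior_set nA nX Q ->
  convex_set Q ->
  admissible_cone nA nX Q K ->
  RB_function nA nX t Xr fs Q (H nA nX t Xr fs K) /\
  (forall lo hi : nat -> ERbar,
     (forall i, (i < t)%nat -> ERle (lo i) (hi i)) ->
     forall y, in_fQ nA nX t fs Q y -> in_box t lo hi y ->
       - log2 (Gbox nA nX t Xr fs K lo hi) <= H nA nX t Xr fs K y).
Proof.
  intros hXr hX hQ _ hK.
  pose proof (G_bounds nA nX t Xr fs Q K hXr hX hQ hK) as Gbounds.
  pose proof (G_pos nA nX t Xr fs Q K hXr hX hQ hK) as Gpos.
  assert (fQ : forall p, Q p -> in_fQ nA nX t fs Q (fvec nA nX fs p)) by (intros p hp; exists p; auto).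
  unfold Defs.H. split; [split; [| split] |].
  - intros y hy. destruct (Gbounds y hy) as [hA [hlo hhi]].
    assert (log2 (G nA nX t Xr fs K y) <= log2 1) by (apply log2_le; auto).
    assert (log2 (/ INR nA) <= log2 (G nA nX t Xr fs K y))
      by (apply log2_le; auto; apply Rinv_0_lt_compat; auto).
    rewrite log2_1 in *. rewrite log2_inv in * by auto. lra.
  - intros p hp a x ha hXx hpos. apply Ropp_le_contravar, log2_le; auto.
    apply (G_is_lub nA nX t Xr fs Q K hXr hX hQ hK _ (fQ p hp)).
    apply (feasible_obj_at_fvec nA nX t Xr fs Q K hXr hQ hK); auto.
  - intros q p1 p2 hq hp1 hp2.
    pose proof (Gpos _ (fQ p1 hp1)) as hG1. pose proof (Gpos _ (fQ p2 hp2)) as hG2.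
    pose proof (log2_concave _ _ q hG1 hG2 hq).
    pose proof (G_concave nA nX t Xr fs Q K hXr hX hQ hK q p1 p2 hq hp1 hp2) as hconc.
    apply log2_le in hconc; [lra | nra].
  - intros lo hi _ y hy hbox. apply Ropp_le_contravar, log2_le; auto.
    apply (G_le_Gbox nA nX t Xr fs Q K hXr hX hQ hK); auto.
Qed.
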